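(* Let $F$ be a formally real field, $(D,\bar{\ })$ an $F$-division algebra with involution, $n\in\mathbb{N}$, and $(A,\sigma)=(M_n(D),\bar{\ }^t)$. Let $a\in\operatorname{Sym}(D,\bar{\ })^\times$ and let $h_1,h_2\in\mathscr F_a$ be such that $[h_1\boxtimes h_2]\in I(A,\sigma)$. Then $[h_1]\in I(A,\sigma)$ or $[h_2]\in I(A,\sigma)$.
   Context: $(D,\bar{\ })$ is a division algebra with involution such that $(M_n(D),\bar{\ }^t)$ (conjugate transpose) is an $F$-algebra with involution (finite-dimensional, centre of degree $\le2$ over $F$, $F$-linear involution). $W(A,\sigma)$ is the Witt group of non-singular hermitian forms over $(A,\sigma)$ on finitely generated right $A$-modules; $[h]$ denotes the Witt class of a form $h$. Every finitely generated right $A$-module is isomorphic to $(D^n)^k$ for a unique $k$, the rank of a form on it; the parity of the rank is a Witt class invariant, and $I(A,\sigma)$ is the subgroup of classes of forms of even rank. $\operatorname{Sym}(D,\bar{\ })^\times$ is the set of invertible $a\in D$ with $\bar a=a$. For such $a$, $h_a:D^n\times D^n\to M_n(D)$, $h_a(x,y)=\bar x^tay$ ($x,y$ viewed as $1\times n$ row vectors), a hermitian form of rank one over $(A,\sigma)$. $\mathscr F_a=\{h_{a^{i_1}}\perp\cdots\perp h_{a^{i_\ell}}\mid \ell\in\mathbb{N},\ i_1,\ldots,i_\ell\in\mathbb{N}_0\}$ ($\perp$ orthogonal sum), and for $h_1=h_{a^{i_1}}\perp\cdots\perp h_{a^{i_k}}$, $h_2=h_{a^{j_1}}\perp\cdots\perp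 h_{a^{j_\ell}}$ in $\mathscr F_a$, $h_1\boxtimes h_2=\perp_{p=1}^k\perp_{q=1}^\ell h_{a^{i_p+j_q}}$. *)

From HB Require Import structures.
From mathcomp Require Import all_boot all_order all_algebra.
From mathcomp Require Import falgebra.
Set Implicit Arguments. Unset Strict Implicit. Unset Printing Implicit Defensive.
Import Order.TTheory GRing.Theory Num.Theory.
Local Open Scope ring_scope.

Definition formally_real (F : fieldType) : Prop :=
  forall s : seq F, \sum_(x <- s) x ^+ 2 != -1.

Definition division_algebra_with_involution (F : fieldType) (D : falgType F)
  (bar : D -> D) : Prop :=
  [/\ forall x : D, x != 0 -> x \is a GRing.unit,
      (\dim ('Z(fullv : {vspace D}))%VS <= 2)%N,
      (forall x y, bar (x + y) = bar x + bar y) /\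
      (forall x y, bar (x * y) = bar y * bar x),
      (forall x, bar (bar x) = x)
    & (forall (c : F) x, bar (c *: x) = c *: bar x)].

Section Forms.
Variables (F : fieldType) (D : falgType F) (bar : D -> D) (n : nat).

Definition ct p q (A : 'M[D]_(p, q)) : 'M[D]_(q, p) := (map_mx bar A)^T.

(* A (sesquilinear) form over (M_n(D), bar^t) on the right module (D^n)^k,
   whose elements are k x n matrices (k rows in D^n); k is the rank. *)
Record hform := HForm { hrank : nat;
  hfun : 'M[D]_(hrank, n) -> 'M[D]_(hrank, n) -> 'M[D]_n }.
Arguments hfun : clear implicits.
Arguments hfun h _ _.

Definition is_sesquilinear (h : hform) : Prop :=
  [/\ forall x1 x2 y, hfun h (x1 + x2) y = hfun h x1 y + hfun h x2 y,
      forall x y1 y2, hfun h x (y1 + y2) = hfun h x y1 + hfun h x y2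
    & forall x y (a b : 'M[D]_n),
        hfun h (x *m a) (y *m b) = ct a *m hfun h x y *m b].

Definition is_hermitian (h : hform) : Prop :=
  forall x y, hfun h y x = ct (hfun h x y).

Definition rlinear k m (f : 'M[D]_(k, n) -> 'M[D]_(m, n)) : Prop :=
  (forall x y, f (x + y) = f x + f y) /\ (forall x a, f (x *m a) = f x *m a).

Definition is_nonsingular (h : hform) : Prop :=
  forall f : 'M[D]_(hrank h, n) -> 'M[D]_n, rlinear f ->
    exists! x, forall y, hfun h x y = f y.

Definition nsh_form (h : hform) : Prop :=
  [/\ is_sesquilinear h, is_hermitian h & is_nonsingular h].

Definition ortho (h1 h2 : hform) : hform :=
  @HForm (hrank h1 + hrank h2) (fun x y =>
    hfun h1 (usubmx x) (usubmx y) + hfun h2 (dsubmx x) (dsubmx y)).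

Definition hyp (m : nat) : hform :=
  @HForm (m + m) (fun x y => ct (usubmx x) *m dsubmx y + ct (dsubmx x) *m usubmx y).

Definition isometric (h1 h2 : hform) : Prop :=
  exists g : 'M[D]_(hrank h1, n) -> 'M[D]_(hrank h2, n),
    [/\ bijective g, rlinear g & forall x y, hfun h2 (g x) (g y) = hfun h1 x y].

Definition witt_equiv (h1 h2 : hform) : Prop :=
  exists m1 m2, isometric (ortho h1 (hyp m1)) (ortho h2 (hyp m2)).

Definition in_I (h : hform) : Prop :=
  exists h', [/\ nsh_form h', ~~ odd (hrank h') & witt_equiv h h'].

Definition hc (c : D) : hform :=
  @HForm 1 (fun x y => ct x *m (c *: y)).

Fixpoint famF (a : D) (i : nat) (s : seq nat) : hform :=
  match s with
  | [::] => hc (a ^+ i)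
  | j :: s' => ortho (hc (a ^+ i)) (famF a j s')
  end.

(* h1 boxtimes h2 for h1 = famF a i1 s1, h2 = famF a i2 s2 *)
Definition boxF (a : D) (i1 : nat) (s1 : seq nat) (i2 : nat) (s2 : seq nat)
  : hform :=
  let p := [seq x + y | x <- i1 :: s1, y <- i2 :: s2] in
  famF a (head 0%N p) (behead p).

End Forms.

(* The rank of a form on (D^n)^k is k, and (D^n)^k has dimension k n [D:F] over F, so
   isometric forms have equal rank; since hyperbolic forms have even rank, the parity of
   the rank is a Witt class invariant, and a non-singular hermitian form lies in
   I(A, sigma) exactly when its rank is even.  The forms in F_a are non-singular hermitian, and the rank of h1 ⊠ h2 is the
   product of the ranks of h1 and h2, so if it is even one of the two ranks is even. *)
From Pilot Require Import Defs.
From HB Require Import structures.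
From mathcomp Require Import all_boot all_order all_algebra falgebra.
Set Implicit Arguments. Unset Strict Implicit. Unset Printing Implicit Defensive.
Import GRing.Theory.
Open Scope ring_scope.

Lemma leq_dim_injective (K : fieldType) (V W : vectType K) (f : {linear V -> W}) :
  injective f -> (dim V <= dim W)%N.
Proof.
move=> f_inj; pose L := linfun f.
have kerL : lker L = 0%VS by apply/eqP/lker0P => x y; rewrite !lfunE; apply: f_inj.
rewrite -!dimvf -(limg_dim_eq (U := fullv) (f := L)) ?kerL ?capv0 //.
exact/dimvS/subvf.
Qed.

Section Rank.
Variables (F : fieldType) (D : falgType F) (n : nat).
Hypothesis n_gt0 : (0 < n)%N.

(* 'M[D]_(k, n) carries no F-vector space structure, {ffun 'I_k * 'I_n -> D} does. *)
Definition mx_ffun k (A : 'M[D]_(k, n)) : {ffun 'I_k * 'I_n -> D} :=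
  [ffun ij => A ij.1 ij.2].
Definition ffun_mx k (f : {ffun 'I_k * 'I_n -> D}) : 'M[D]_(k, n) :=
  \matrix_(i, j) f (i, j).

Lemma mx_ffunK k : cancel (@mx_ffun k) (@ffun_mx k).
Proof. by move=> A; apply/matrixP=> i j; rewrite !mxE ffunE. Qed.

Lemma ffun_mxK k : cancel (@ffun_mx k) (@mx_ffun k).
Proof. by move=> f; apply/ffunP=> -[i j]; rewrite ffunE mxE. Qed.

Lemma ffun_mxD k (f g : {ffun 'I_k * 'I_n -> D}) :
  ffun_mx (f + g) = ffun_mx f + ffun_mx g.
Proof. by apply/matrixP=> i j; rewrite !mxE ffunE. Qed.

Lemma mulmx_scalar_mxE k (A : 'M[D]_(k, n)) (b : D) i j :
  (A *m b%:M) i j = A i j * b.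
Proof.
rewrite !mxE (bigD1 j) //= big1 ?addr0; first by rewrite mxE eqxx mulr1n.
by move=> l /negPf nlj; rewrite mxE nlj mulr0n mulr0.
Qed.

Lemma ffun_mxZ k (c : F) (f : {ffun 'I_k * 'I_n -> D}) :
  ffun_mx (c *: f) = ffun_mx f *m (c%:A)%:M.
Proof.
apply/matrixP=> i j; rewrite mulmx_scalar_mxE !mxE ffunE.
by rewrite -[in LHS](mulr1 (f (i, j))) scalerAr.
Qed.

Lemma dim_ffun_mx k : dim {ffun 'I_k * 'I_n -> D} = (k * n * dim D)%N.
Proof.
have -> : dim {ffun 'I_k * 'I_n -> D} = (#|{: 'I_k * 'I_n}| * dim D)%N by [].
by rewrite card_prod !card_ord.
Qed.

Lemma rank_leq_rlinear_inj k1 k2 (g : 'M[D]_(k1, n) -> 'M[D]_(k2, n)) :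
  rlinear g -> injective g -> (k1 <= k2)%N.
Proof.
move=> [gD gM] g_inj.
pose G f := mx_ffun (g (ffun_mx f)).
have G_lin : linear G.
  move=> c f h; rewrite /G ffun_mxD ffun_mxZ gD gM.
  apply/ffunP=> ij; rewrite !ffunE [in LHS]mxE mulmx_scalar_mxE.
  by rewrite -scalerAr mulr1.
pose GL : {linear _ -> _} := HB.pack G (GRing.isLinear.Build F _ _ *:%R G G_lin).
have G_inj : injective GL.
  by move=> x y /(can_inj (@mx_ffunK _)) /g_inj /(can_inj (@ffun_mxK _)).
have := leq_dim_injective G_inj; rewrite !dim_ffun_mx leq_pmul2r.
  by rewrite leq_pmul2r.
by rewrite -dimvf adim_gt0.
Qed.

Lemma isometric_hrank (h1 h2 : hform D n) :
  isometric h1 h2 -> hrank h1 = hrank h2.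
Proof.
move=> [g [g_bij [gD gM] _]]; have [g' gK g'K] := g_bij.
have g'_lin : rlinear g'.
  by split=> [x y|x a]; apply: (bij_inj g_bij); rewrite ?gD ?gM !g'K.
apply/eqP; rewrite eqn_leq (rank_leq_rlinear_inj (conj gD gM) (bij_inj g_bij)).
exact: rank_leq_rlinear_inj g'_lin (can_inj g'K).
Qed.

Lemma witt_equiv_odd_hrank (bar : D -> D) (h1 h2 : hform D n) :
  witt_equiv bar h1 h2 -> odd (hrank h1) = odd (hrank h2).
Proof.
move=> [m1 [m2 /isometric_hrank /= /(congr1 odd)]].
by rewrite !oddD !addbb !addbF.
Qed.

Lemma in_I_hrank_even (bar : D -> D) (h : hform D n) :
  in_I bar h -> ~~ odd (hrank h).
Proof. by move=> [h' [_ h'_even /witt_equiv_odd_hrank ->]]. Qed.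

End Rank.

Section Involution.
Variables (F : fieldType) (D : falgType F) (bar : D -> D) (n : nat).
Hypothesis barD : forall x y, bar (x + y) = bar x + bar y.
Hypothesis barM : forall x y, bar (x * y) = bar y * bar x.
Hypothesis barK : involutive bar.

Lemma bar0 : bar 0 = 0.
Proof. by apply/(addrI (bar 0)); rewrite -barD !addr0. Qed.

Lemma bar1 : bar 1 = 1.
Proof. by have := barM 1 (bar 1); rewrite mul1r !barK mul1r. Qed.

Lemma bar_sum (I : Type) (r : seq I) (P : pred I) (G : I -> D) :
  bar (\sum_(i <- r | P i) G i) = \sum_(i <- r | P i) bar (G i).
Proof. exact: (big_morph bar barD bar0). Qed.

Lemma barX_sym (a : D) k : bar a = a -> bar (a ^+ k) = a ^+ k.
Proof.
move=> bara; elim: k => [|k IH]; first by rewrite expr0 bar1.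
by rewrite [in LHS]exprS barM IH bara -exprSr.
Qed.

Lemma ctE p q (A : 'M[D]_(p, q)) i j : ct bar A i j = bar (A j i).
Proof. by rewrite /ct !mxE. Qed.

Lemma ctD p q (A B : 'M[D]_(p, q)) : ct bar (A + B) = ct bar A + ct bar B.
Proof. by apply/matrixP=> i j; rewrite !ctE !mxE barD. Qed.

Lemma ctM p q r (A : 'M[D]_(p, q)) (B : 'M[D]_(q, r)) :
  ct bar (A *m B) = ct bar B *m ct bar A.
Proof.
apply/matrixP=> i j; rewrite ctE !mxE bar_sum; apply: eq_bigr => k _.
by rewrite barM !ctE.
Qed.

Lemma hc_sesquilinear (c : D) : is_sesquilinear bar (hc bar n c).
Proof.
split=> /= [x1 x2 y|x y1 y2|x y a b]; first by rewrite ctD mulmxDl.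
  by rewrite scalerDr mulmxDr.
by rewrite ctM scalemxAl !mulmxA.
Qed.

Lemma hc_hermitian (c : D) : bar c = c -> is_hermitian bar (hc bar n c).
Proof.
move=> barc x y /=; apply/matrixP=> i j; rewrite ctE !mxE bar_sum.
by apply: eq_bigr => k _; rewrite !mxE !barM barK barc mulrA.
Qed.

Section RowForms.
Hypothesis n_gt0 : (0 < n)%N.
Let i0 := Ordinal n_gt0.
Let e : 'M[D]_(1, n) := delta_mx 0 i0.

Lemma row_delta_mulmx (y : 'M[D]_(1, n)) :
  y = e *m \matrix_(i, j) ((i == i0)%:R * y 0 j).
Proof.
apply/matrixP=> i j; rewrite !mxE (bigD1 i0) //= big1 ?addr0.
  by rewrite !mxE eqxx mul1r ord1 !eqxx mul1r.
by move=> k /negPf nk; rewrite !mxE nk andbF mul0r.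
Qed.

(* As e = e *m delta_mx i0 i0, the value f e vanishes outside column i0. *)
Lemma rlinear_row_delta (f : 'M[D]_(1, n) -> 'M[D]_n) i j :
  rlinear f -> f e i j = f e i i0 * (j == i0)%:R.
Proof.
move=> [_ fM]; have ee : e *m delta_mx i0 i0 = e by rewrite mul_delta_mx.
rewrite -{1}ee fM !mxE (bigD1 i0) //= big1 ?addr0; first by rewrite !mxE eqxx eq_sym.
by move=> k /negPf nk; rewrite !mxE nk mulr0.
Qed.

Lemma hc_nonsingular (c : D) : c \is a GRing.unit -> is_nonsingular (hc bar n c).
Proof.
move=> cU f f_lin; have [_ fM] := f_lin.
pose x : 'M[D]_(1, n) := \row_i bar (f e i i0 * c^-1).
have fe : ct bar x *m (c *: e) = f e.
  apply/matrixP=> i j; rewrite !mxE big_ord1 (rlinear_row_delta _ _ f_lin) ctE !mxE.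
  by rewrite barK eqxx /= mulrA divrK // eq_sym.
exists x; split=> /= [y|x' x'_rep].
  by rewrite [y]row_delta_mulmx fM scalemxAl mulmxA fe.
apply/matrixP=> i j; rewrite ord1.
have /matrixP/(_ j i0) := x'_rep e; rewrite -fe !mxE !big_ord1 !ctE !mxE eqxx /=.
by rewrite !mulr1 => /(mulIr cU)/(can_inj barK).
Qed.

Lemma hc_nsh (c : D) : c \is a GRing.unit -> bar c = c -> nsh_form bar (hc bar n c).
Proof.
by move=> cU barc; split; [exact: hc_sesquilinear|exact: hc_hermitian|exact: hc_nonsingular].
Qed.

End RowForms.
End Involution.

Section Ortho.
Variables (F : fieldType) (D : falgType F) (bar : D -> D) (n : nat).
Hypothesis barD : forall x y, bar (x + y) = bar x + bar y.

Lemma usubmxD m1 m2 (x y : 'M[D]_(m1 + m2, n)) : usubmx (x + y) = usubmx x + usubmx y.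
Proof. by apply/matrixP=> i j; rewrite !mxE. Qed.

Lemma dsubmxD m1 m2 (x y : 'M[D]_(m1 + m2, n)) : dsubmx (x + y) = dsubmx x + dsubmx y.
Proof. by apply/matrixP=> i j; rewrite !mxE. Qed.

Lemma sesquilinear_hfunx0 (h : hform D n) x :
  is_sesquilinear bar h -> hfun (h := h) x 0 = 0.
Proof. by case=> _ hD _; apply/(addrI (hfun x 0)); rewrite -hD !addr0. Qed.

Lemma ortho_sesquilinear (h1 h2 : hform D n) :
  is_sesquilinear bar h1 -> is_sesquilinear bar h2 ->
  is_sesquilinear bar (Defs.ortho h1 h2).
Proof.
move=> [h1D h1D' h1M] [h2D h2D' h2M].
split=> /= [x1 x2 y|x y1 y2|x y a b].
- by rewrite usubmxD dsubmxD h1D h2D addrACA.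
- by rewrite usubmxD dsubmxD h1D' h2D' addrACA.
- by rewrite -!mul_usub_mx -!mul_dsub_mx h1M h2M mulmxDr mulmxDl.
Qed.

Lemma ortho_hermitian (h1 h2 : hform D n) :
  is_hermitian bar h1 -> is_hermitian bar h2 -> is_hermitian bar (Defs.ortho h1 h2).
Proof.
move=> h1H h2H x y /=; rewrite h1H h2H.
by apply/matrixP=> i j; rewrite /ct !mxE barD.
Qed.

(* A functional on the orthogonal sum is represented blockwise, by representing
   its restrictions to the two summands. *)
Lemma ortho_nonsingular (h1 h2 : hform D n) :
  is_sesquilinear bar h1 -> is_sesquilinear bar h2 ->
  is_nonsingular h1 -> is_nonsingular h2 ->
  is_nonsingular (Defs.ortho h1 h2).
Proof.
move=> h1S h2S h1N h2N f [fD fM].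
have f1_lin : rlinear (fun u => f (col_mx u 0)).
  by split=> [u v|u a]; rewrite -?fD -?fM ?add_col_mx ?addr0 ?mul_col_mx ?mul0mx.
have f2_lin : rlinear (fun v => f (col_mx 0 v)).
  by split=> [u v|u a]; rewrite -?fD -?fM ?add_col_mx ?addr0 ?mul_col_mx ?mul0mx.
have [x1 [x1_rep x1_uniq]] := h1N _ f1_lin.
have [x2 [x2_rep x2_uniq]] := h2N _ f2_lin.
exists (col_mx x1 x2); split=> /= [y|x x_rep].
  by rewrite col_mxKu col_mxKd x1_rep x2_rep -fD add_col_mx addr0 add0r vsubmxK.
rewrite -[x]vsubmxK; congr col_mx.
  by apply: x1_uniq => u; rewrite -x_rep col_mxKu col_mxKd sesquilinear_hfunx0 ?addr0.
by apply: x2_uniq => v; rewrite -x_rep col_mxKu col_mxKd sesquilinear_hfunx0 ?add0r.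
Qed.

Lemma ortho_nsh (h1 h2 : hform D n) :
  nsh_form bar h1 -> nsh_form bar h2 -> nsh_form bar (Defs.ortho h1 h2).
Proof.
move=> [h1S h1H h1N] [h2S h2H h2N]; split.
- exact: ortho_sesquilinear.
- exact: ortho_hermitian.
- exact: ortho_nonsingular.
Qed.

End Ortho.

Section FamilyF.
Variables (F : fieldType) (D : falgType F) (bar : D -> D) (n : nat) (a : D).

Lemma hrank_famF i s : hrank (famF bar n a i s) = (size s).+1.
Proof. by elim: s i => [|j s IH] i //=; rewrite IH. Qed.

Lemma hrank_boxF i1 s1 i2 s2 :
  hrank (boxF bar n a i1 s1 i2 s2) = ((size s1).+1 * (size s2).+1)%N.
Proof.
rewrite /boxF hrank_famF size_behead prednK; first by rewrite size_allpairs.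
by rewrite size_allpairs.
Qed.

Lemma famF_nsh i s :
  (0 < n)%N -> (forall x y, bar (x + y) = bar x + bar y) ->
  (forall x y, bar (x * y) = bar y * bar x) -> involutive bar ->
  bar a = a -> a \is a GRing.unit -> nsh_form bar (famF bar n a i s).
Proof.
move=> n_gt0 barD barM barK bara aU.
have hcX_nsh k : nsh_form bar (hc bar n (a ^+ k)).
  by apply: hc_nsh; rewrite ?unitrX ?barX_sym.
by elim: s i => [|j s IH] i /=; last apply: ortho_nsh.
Qed.

End FamilyF.

Lemma nsh_even_in_I (F : fieldType) (D : falgType F) (bar : D -> D) n (h : hform D n) :
  nsh_form bar h -> ~~ odd (hrank h) -> in_I bar h.
Proof.
move=> h_nsh h_even; exists h; split=> //.
by exists 0%N, 0%N, id; split=> //; exists id.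
Qed.

Theorem mainTheorem14 (F : fieldType) (D : falgType F) (bar : D -> D) (n : nat)
  (a : D) (i1 : nat) (s1 : seq nat) (i2 : nat) (s2 : seq nat) :
  formally_real F ->
  division_algebra_with_involution bar ->
  (0 < n)%N ->
  bar a = a -> a \is a GRing.unit ->
  in_I bar (boxF bar n a i1 s1 i2 s2) ->
  in_I bar (famF bar n a i1 s1) \/ in_I bar (famF bar n a i2 s2).
Proof.
move=> _ [_ _ [barD barM] barK _] n_gt0 bara aU /(in_I_hrank_even n_gt0).
have famF_in_I i s : ~~ odd (size s).+1 -> in_I bar (famF bar n a i s).
  move=> s_even; apply: nsh_even_in_I; last by rewrite hrank_famF.
  exact: famF_nsh.
rewrite hrank_boxF oddM negb_and => /orP[s1_even|s2_even].
  by left; apply: famF_in_I.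
by right; apply: famF_in_I.
Qed.
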